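(* Let $n$ be a positive integer with $n \equiv 3 \pmod 6$ and \[n \notin \{9, 15, 21, 141, 153, 165, 177, 189, 231, 249, 261, 285, 351, 357\},\] and let $\rho$ be an integer with $1 \le \rho \le n/3$. Then there exists an $(n+\rho,4)$-packing with exactly $\rho n/3$ blocks in which the largest partial parallel class has size $\rho$.
   Context: For integers $v \ge k \ge 2$, a $(v,k)$-packing is a pair $(X,\mathcal{B})$ where $X$ is a set of $v$ points and $\mathcal{B}$ is a set of $k$-subsets of $X$ (blocks) such that every pair of distinct points lies in at most one block. A partial parallel class (PPC) is a set of pairwise disjoint blocks; its size is the number of blocks in it. ''The largest PPC has size $\rho$'' means that the packing contains a PPC of size $\rho$ but no PPC of size $\rho+1$. *)

From mathcomp Require Import all_boot.
Set Implicit Arguments. Unset Strict Implicit. Unset Printing Implicit Defensive.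

Definition is_packing (v k : nat) (B : {set {set 'I_v}}) : Prop :=
  (forall b, b \in B -> #|b| = k) /\
  (forall x y : 'I_v, x != y ->
     #|[set b in B | (x \in b) && (y \in b)]| <= 1).

Definition is_ppc (v : nat) (B P : {set {set 'I_v}}) : Prop :=
  P \subset B /\
  (forall b1 b2, b1 \in P -> b2 \in P -> b1 != b2 -> [disjoint b1 & b2]).

Definition largest_ppc (v : nat) (B : {set {set 'I_v}}) (rho : nat) : Prop :=
  (exists P, is_ppc B P /\ #|P| = rho) /\
  ~ (exists P, is_ppc B P /\ #|P| = rho.+1).

From HB Require Import structures.
From mathcomp Require Import all_boot all_algebra zify.
Set Implicit Arguments. Unset Strict Implicit. Unset Printing Implicit Defensive.
Import GRing.Theory.

(* Write n = 3m, m odd. Each block is the union of one of rho new points and a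
   triple of old points, so a partial parallel class has at most rho blocks. It
   suffices to have m classes of m disjoint triples on the n old points, any two
   points lying in at most one triple, and one triple chosen in each class such
   that the chosen triples are disjoint: the i-th new point is added to the
   triples of the i-th class, and the chosen triples of the first rho classes
   give a partial parallel class of size rho.
   Such systems multiply: given one for m and an abelian group G of odd order
   with a map phi such that phi, phi + 1 and phi + 2 are injective, the triples
   {(T j x p, h + g p) | p} form one for m |G|, the chosen ones being
   {(T j (t j) p, phi g + g p) | p}. Z/q with phi = id (q prime to 6) and
   Z/3 x Z/3 with a rotation are such groups, and a tripling construction over
   G x AG(2,3) gives 3 |G|. This reaches every odd m except m = 3, so of the
   excluded values of n only n = 9 is needed. *)

(* T j x is the x-th triple of class j, with points T j x p for p : 'I_3. *)
Definition resolvable_packing (J X V : finType) (T : J -> X -> 'I_3 -> V) : Prop :=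
  (forall j x x' p p', T j x p = T j x' p' -> x = x' /\ p = p') /\
  (forall j j' x x' p p' q q', T j x p = T j' x' q -> T j x p' = T j' x' q' ->
     p != p' -> j = j' /\ x = x').

Definition transversal (J X V : finType) (T : J -> X -> 'I_3 -> V) (t : J -> X) : Prop :=
  forall j j' p p', T j (t j) p = T j' (t j') p' -> j = j' /\ p = p'.

Definition transversal_resolvable (m : nat) : Prop :=
  exists (J X V : finType) (T : J -> X -> 'I_3 -> V),
    [/\ #|J| = m, #|X| = m, #|V| = 3 * m, resolvable_packing T & exists t, transversal T t].

Lemma ppc_card_le (v : nat) (B P : {set {set 'I_v}}) (S : {set 'I_v}) :
  is_ppc B P -> (forall b, b \in B -> ~~ [disjoint b & S]) -> #|P| <= #|S|.
Proof.
move=> [/subsetP sPB disjP] meetS.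
pose f b := [pick z in b :&: S].
have fP b : b \in P -> exists2 z, f b = Some z & z \in b :&: S.
  move=> /sPB /meetS; rewrite -setI_eq0 => /set0Pn [z zbS].
  by rewrite /f; case: pickP => [z' ?|/(_ z)]; [exists z' | rewrite zbS].
have f_inj : {in P &, injective f}.
  move=> b1 b2 P1 P2; have [z -> /setIP [zb1 _]] := fP _ P1.
  have [z2 -> /setIP [zb2 _]] := fP _ P2; case=> z12; subst z2.
  case: (eqVneq b1 b2) => // /(disjP _ _ P1 P2) /disjointFr /(_ zb1).
  by rewrite zb2.
rewrite -(card_in_imset f_inj) -(card_imset S (@Some_inj _)).
apply/subset_leq_card/subsetP => _ /imsetP [b bP ->].
by have [z -> /setIP [_ zS]] := fP _ bP; exact: imset_f.
Qed.

Section Extension.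
Variables (J X V : finType) (T : J -> X -> 'I_3 -> V) (t : J -> X).
Hypotheses (T_packing : resolvable_packing T) (T_transversal : transversal T t).
Variables (n rho : nat) (e : 'I_rho -> J).
Hypotheses (e_inj : injective e) (card_V : #|V| = n).

Definition fin_pt (v : V) : 'I_(n + rho) := lshift rho (cast_ord card_V (enum_rank v)).
Definition inf_pt (i : 'I_rho) : 'I_(n + rho) := rshift n i.

Lemma fin_pt_inj : injective fin_pt.
Proof. by move=> u v /lshift_inj /cast_ord_inj /enum_rank_inj. Qed.

Lemma fin_pt_neq_inf_pt v i : fin_pt v != inf_pt i.
Proof. by rewrite eq_lrshift. Qed.

Definition block (i : 'I_rho) (x : X) : {set 'I_(n + rho)} :=
  inf_pt i |: [set fin_pt (T (e i) x p) | p : 'I_3].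

Definition blocks : {set {set 'I_(n + rho)}} := [set block ix.1 ix.2 | ix : 'I_rho * X].

Lemma inf_pt_block i i' x : (inf_pt i' \in block i x) = (i' == i).
Proof.
rewrite !inE (inj_eq (@rshift_inj _ _)); case: (i' == i) => //=.
by apply/imsetP => -[p _ /eqP]; rewrite eq_sym (negbTE (fin_pt_neq_inf_pt _ _)).
Qed.

Lemma fin_pt_block v i x : fin_pt v \in block i x -> exists p, v = T (e i) x p.
Proof.
rewrite !inE (negbTE (fin_pt_neq_inf_pt _ _)) => /imsetP [p _ /fin_pt_inj ->].
by exists p.
Qed.

Lemma block_pointP z i x :
  z \in block i x -> z = inf_pt i \/ exists p, z = fin_pt (T (e i) x p).
Proof. by rewrite !inE => /orP [/eqP ->|/imsetP [p _ ->]]; [left | right; exists p]. Qed.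

Lemma inf_pt_in_block i x : inf_pt i \in block i x.
Proof. by rewrite inf_pt_block. Qed.

Lemma fin_pt_in_block i x p : fin_pt (T (e i) x p) \in block i x.
Proof. by apply/setU1P; right; exact: imset_f. Qed.

Lemma block_pair_uniq z1 z2 i x i' x' : z1 != z2 ->
  z1 \in block i x -> z2 \in block i x -> z1 \in block i' x' -> z2 \in block i' x' ->
  i = i' /\ x = x'.
Proof.
have [T_class T_pair] := T_packing.
wlog [p2 ->] : z1 z2 / exists p2, z2 = fin_pt (T (e i) x p2).
  move=> fin_z2 z12 z1b z2b z1b' z2b'.
  case: (block_pointP z2b) => [z2i|fin2]; first last.
    exact: (fin_z2 z1 z2 fin2).
  case: (block_pointP z1b) => [z1i|fin1]; first by rewrite z1i z2i eqxx in z12.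
  by apply: (fin_z2 z2 z1 fin1); rewrite // eq_sym.
move=> z12 z1b _ z1b' /fin_pt_block [q2 E2].
case: (block_pointP z1b) => [z1i|[p1 z1p]]; subst z1.
  move: z1b'; rewrite inf_pt_block => /eqP ii; subst i'.
  by case: (T_class _ _ _ _ _ E2).
have [q1 E1] := fin_pt_block z1b'.
have p12 : p1 != p2 by apply: contraNneq z12 => ->.
by have [/e_inj -> ->] := T_pair _ _ _ _ _ _ _ _ E1 E2 p12.
Qed.

Lemma card_block i x : #|block i x| = 4.
Proof.
have [T_class _] := T_packing.
rewrite cardsU1 card_imset ?card_ord.
  rewrite (_ : _ \notin _) //; apply/imsetP => -[p _ /eqP].
  by rewrite eq_sym (negbTE (fin_pt_neq_inf_pt _ _)).
by move=> p q /fin_pt_inj /T_class [].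
Qed.

Lemma block_inj : injective (fun ix : 'I_rho * X => block ix.1 ix.2).
Proof.
move=> [i x] [i' x'] /= E.
have z12 : inf_pt i != fin_pt (T (e i) x ord0) by rewrite eq_sym fin_pt_neq_inf_pt.
have z1b' : inf_pt i \in block i' x' by rewrite -E inf_pt_in_block.
have z2b' : fin_pt (T (e i) x ord0) \in block i' x' by rewrite -E fin_pt_in_block.
by have [-> ->] := block_pair_uniq z12 (inf_pt_in_block i x) (fin_pt_in_block i x ord0) z1b' z2b'.
Qed.

Lemma blocks_packing : is_packing 4 blocks.
Proof.
split=> [_ /imsetP [[i x] _ ->]|z1 z2 z12]; first exact: card_block.
apply/card_le1_eqP => b1 b2; rewrite !inE.
move=> /andP [/imsetP [[i x] _ ->] /andP [z1b z2b]].
move=> /andP [/imsetP [[i' x'] _ ->] /andP [z1b' z2b']].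
by have [-> ->] := block_pair_uniq z12 z1b z2b z1b' z2b'.
Qed.

Lemma card_blocks : #|blocks| = rho * #|X|.
Proof. by rewrite card_imset ?card_prod ?card_ord //; exact: block_inj. Qed.

Definition transversal_blocks : {set {set 'I_(n + rho)}} :=
  [set block i (t (e i)) | i : 'I_rho].

Lemma transversal_blocks_ppc :
  is_ppc blocks transversal_blocks /\ #|transversal_blocks| = rho.
Proof.
split; last by rewrite card_imset ?card_ord // => i j /(@block_inj (i, _) (j, _)) [].
split=> [|_ _ /imsetP [i _ ->] /imsetP [j _ ->] bij].
  by apply/subsetP => _ /imsetP [i _ ->]; apply/imsetP; exists (i, t (e i)).
have ij : i != j by apply: contraNneq bij => ->.
apply/pred0P => z /=; apply/negbTE/negP => /andP [/block_pointP [->|[p ->]]].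
  by rewrite inf_pt_block (negbTE ij).
case/fin_pt_block => q /T_transversal [/e_inj /eqP].
by rewrite (negbTE ij).
Qed.

Lemma blocks_ppc_le P : is_ppc blocks P -> #|P| <= rho.
Proof.
move=> ppcP.
have meet b : b \in blocks -> ~~ [disjoint b & [set inf_pt i | i : 'I_rho]].
  move=> /imsetP [[i x] _ ->]; rewrite -setI_eq0; apply/set0Pn; exists (inf_pt i).
  by rewrite inE inf_pt_in_block imset_f.
apply: leq_trans (ppc_card_le ppcP meet) _.
by rewrite (leq_trans (leq_imset_card _ _)) ?card_ord.
Qed.

Lemma blocks_largest_ppc : largest_ppc blocks rho.
Proof.
split; first by exists transversal_blocks; exact: transversal_blocks_ppc.
by case=> P [/blocks_ppc_le le_P card_P]; rewrite card_P ltnn in le_P.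
Qed.

End Extension.

Lemma packing_of_transversal_resolvable m n rho :
  transversal_resolvable m -> n = 3 * m -> rho <= m ->
  exists B : {set {set 'I_(n + rho)}},
    [/\ is_packing 4 B, #|B| = rho * m & largest_ppc B rho].
Proof.
move=> [J [X [V [T [card_J card_X card_V T_packing [t T_transversal]]]]]] n_eq le_rho.
rewrite -n_eq in card_V.
have le_rho_J : rho <= #|J| by rewrite card_J.
pose e i := enum_val (widen_ord le_rho_J i).
have e_inj : injective e by move=> i j /enum_val_inj /(congr1 val) /= /val_inj.
exists (blocks T e card_V); split.
- exact: blocks_packing.
- by rewrite (card_blocks T_packing e_inj) card_X.
- exact: (blocks_largest_ppc T_packing T_transversal e_inj).
Qed.

Section TwoTorsionFree.
Local Open Scope ring_scope.
Variable G : zmodType.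
Hypothesis G2 : forall x : G, x *+ 2 = 0 -> x = 0.

Lemma natmul3_eq (x : G) (a b : 'I_3) : x *+ a = x *+ b -> a != b -> x = 0.
Proof.
have x_eq_2x : x = x *+ 2 -> x = 0 by rewrite mulr2n -{1}[x]addr0 => /addrI /esym.
case: a b => [[|[|[|//]]] ?] [[|[|[|//]]] ?] //=; rewrite ?mulr0n ?mulr1n => + _.
- by move=> /esym /G2.
- exact: x_eq_2x.
- exact: G2.
- by move=> /esym /x_eq_2x.
Qed.

Lemma affine_eq2 (g g' h h' : G) (p p' : 'I_3) :
  h + g *+ p = h' + g' *+ p -> h + g *+ p' = h' + g' *+ p' -> p != p' -> g = g' /\ h = h'.
Proof.
have slope q : h + g *+ q = h' + g' *+ q -> (g - g') *+ q = h' - h.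
  by move=> E; rewrite mulrnBl; apply/eqP; rewrite subr_eq addrAC -E addrAC subrr add0r.
move=> E /slope E' pp'.
have gg' : g = g'.
  by apply/eqP; rewrite -subr_eq0; apply/eqP/(natmul3_eq _ pp'); rewrite (slope _ E) E'.
by subst g'; split => //; move: E => /addIr.
Qed.
End TwoTorsionFree.

Section AffinePlane.
Local Open Scope ring_scope.

Definition affine_line (d : option 'I_3) (b p : 'I_3) : 'I_3 * 'I_3 :=
  if d is Some c then (p, b + c *+ p) else (b, p).

Lemma ord3_2torsion_free (x : 'I_3) : x *+ 2 = 0 -> x = 0.
Proof. by move=> /eqP; apply: contraTeq; case: x => [[|[|[|?]]] ?]. Qed.

Lemma affine_plane_packing : resolvable_packing affine_line.
Proof.
split=> [[c|] b b' p p'|[c|] [c'|] b b' p p' q q'].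
- by move=> /pair_equal_spec [<- /addIr ->].
- by move=> /pair_equal_spec [-> ->].
- move=> /pair_equal_spec [<- E] /pair_equal_spec [<- E'] pp'.
  by have [-> ->] := affine_eq2 ord3_2torsion_free E E' pp'.
- by move=> /pair_equal_spec [-> _] /pair_equal_spec [-> _]; rewrite eqxx.
- by move=> /pair_equal_spec [<- ->] /pair_equal_spec [<- ->]; rewrite eqxx.
- by move=> /pair_equal_spec [-> _].
Qed.
End AffinePlane.

Definition admissible (G : zmodType) (phi : G -> G) : Prop :=
  (forall x : G, (x *+ 2 = 0 -> x = 0)%R) /\ forall p : 'I_3, injective (fun x => phi x + x *+ p)%R.

Lemma transversal_resolvable1 : transversal_resolvable 1.
Proof.
exists unit, unit, 'I_3, (fun _ _ p => p); split; rewrite ?card_unit ?card_ord //.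
  by split=> [[] [] [] p p'|[] [] [] []] // ->.
by exists id; case; case=> p p' ->.
Qed.

Section Product.
Local Open Scope ring_scope.
Variables (G : finZmodType) (phi : G -> G).
Hypothesis phi_adm : admissible phi.

Lemma transversal_resolvable_mul m :
  transversal_resolvable m -> transversal_resolvable (m * #|G|).
Proof.
have [G2 phi_inj] := phi_adm.
move=> [J [X [V [T [card_J card_X card_V [T_class T_pair] [t T_transversal]]]]]].
exists (J * G)%type, (X * G)%type, (V * G)%type,
  (fun j x p => (T j.1 x.1 p, x.2 + j.2 *+ p)); split.
- by rewrite card_prod card_J.
- by rewrite card_prod card_X.
- by rewrite card_prod card_V mulnA.
- split=> [[j g] [x h] [x' h'] p p' /= [/T_class [-> ->] /addIr -> //]|].
  move=> [j g] [j' g'] [x h] [x' h'] p p' q q' /= [E1 F1] [E2 F2] pp'.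
  have [jj' xx'] := T_pair _ _ _ _ _ _ _ _ E1 E2 pp'; subst j' x'.
  case: (T_class _ _ _ _ _ E1) (T_class _ _ _ _ _ E2) => _ <- [_ <-] in F1 F2.
  by have [-> ->] := affine_eq2 G2 F1 F2 pp'.
- exists (fun j => (t j.1, phi j.2)) => -[j g] [j' g'] p p' /= [].
  by move=> /T_transversal [-> ->] /(phi_inj p') ->.
Qed.
End Product.

Section Tripling.
Local Open Scope ring_scope.
Variables (G : finZmodType) (phi : G -> G) (e : G).
Hypotheses (phi_adm : admissible phi) (e_neq0 : e != 0).

(* The points are G x AG(2,3). The triple (i, b) of class (s, y) has G-part
   y + phi i + i p and runs along the line through b of the horizontal direction
   if i = e s, of the s-th other direction otherwise; the horizontal triples
   (e s, s) are pairwise disjoint. *)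
Definition direction (s : 'I_3) (special : bool) : option 'I_3 :=
  if special then Some ord0 else if s == ord0 then None else Some s.

Definition tripled (j : 'I_3 * G) (x : G * 'I_3) (p : 'I_3) : G * ('I_3 * 'I_3) :=
  (j.2 + phi x.1 + x.1 *+ p, affine_line (direction j.1 (x.1 == e *+ j.1)) x.2 p).

(* line_param s reads the parameter p off a point of a triple of class s: the
   second coordinate on the vertical lines of class 0, the first otherwise. It
   is wrong only on the horizontal lines of class 0, which belong to
   i = e *+ 0 = 0, so i *+ p is always recovered. *)
Definition line_param (s : 'I_3) (r : 'I_3 * 'I_3) : 'I_3 := if s == ord0 then r.2 else r.1.

Lemma mulrn_line_param s i b p :
  i *+ line_param s (affine_line (direction s (i == e *+ s)) b p) = i *+ p.
Proof.
rewrite /line_param /direction; case: eqP => [->|_]; case: eqP => [->|_] //=.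
by rewrite mulr0n !mul0rn.
Qed.

Lemma natmul_e_inj : injective (fun s : 'I_3 => e *+ s).
Proof.
have [G2 _] := phi_adm.
move=> s s' E; apply/eqP/negP => /negP ss'.
by move: e_neq0; rewrite (natmul3_eq G2 E ss') eqxx.
Qed.

Lemma direction_inj s s' i :
  direction s (i == e *+ s) = direction s' (i == e *+ s') -> s = s'.
Proof.
rewrite /direction.
case: (eqVneq i (e *+ s)) => [Es|_]; case: (eqVneq i (e *+ s')) => [Es'|_].
- by move=> _; apply: natmul_e_inj; rewrite /= -Es -Es'.
- by case: eqVneq => // s'0 [s'0']; rewrite -s'0' eqxx in s'0.
- by case: eqVneq => // s0 [s0']; rewrite s0' eqxx in s0.
- by case: eqVneq => [->|_]; case: eqVneq => [->|_] // [].
Qed.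

Lemma tripled_packing : resolvable_packing tripled.
Proof.
have [G2 phi_inj] := phi_adm; have [line_class line_pair] := affine_plane_packing.
split=> [[s y] [i b] [i' b'] p p' [E F]|].
  have ii' : i = i'.
    apply: (phi_inj (line_param s (affine_line (direction s (i == e *+ s)) b p))).
    rewrite /= mulrn_line_param [in RHS]F mulrn_line_param.
    by apply: (@addrI _ y); rewrite !addrA.
  by subst i'; have [-> ->] := line_class _ _ _ _ _ F.
move=> [s y] [s' y'] [i b] [i' b'] p p' q q' [E1 F1] [E2 F2] pp'.
have [dd' bb'] := line_pair _ _ _ _ _ _ _ _ F1 F2 pp'; subst b'.
rewrite -dd' in F1 F2.
case: (line_class _ _ _ _ _ F1) (line_class _ _ _ _ _ F2) => _ <- [_ <-] in E1 E2.
have [ii' yy'] := affine_eq2 G2 E1 E2 pp'; subst i'.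
by move/addIr: yy' => <-; rewrite (direction_inj dd').
Qed.

Lemma tripled_transversal : transversal tripled (fun j => (e *+ j.1, j.1)).
Proof.
have [line_class _] := affine_plane_packing.
move=> [s y] [s' y'] p p' [E F]; rewrite /= !eqxx in F.
have [ss' pp'] := line_class _ _ _ _ _ F; subst s' p'.
by move/addIr/addIr: E => ->.
Qed.

Lemma transversal_resolvable_triple : transversal_resolvable (3 * #|G|).
Proof.
exists ('I_3 * G)%type, (G * 'I_3)%type, (G * ('I_3 * 'I_3))%type, tripled; split.
- by rewrite card_prod card_ord.
- by rewrite card_prod card_ord mulnC.
- by rewrite !card_prod !card_ord mulnC -mulnA.
- exact: tripled_packing.
- by exists (fun j : 'I_3 * G => (e *+ j.1, j.1)); exact: tripled_transversal.
Qed.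
End Tripling.

Lemma Zp_admissible q : 1 < q -> coprime q 6 -> admissible (@id 'Z_q).
Proof.
move=> q_gt1; rewrite (coprimeMr q 2 3) => /andP [q2 q3].
have natmul_inj k : coprime q k -> injective (fun x : 'Z_q => (x *+ k)%R).
  move=> qk x y; rewrite /= -[(x *+ k)%R]mulr_natr -[(y *+ k)%R]mulr_natr.
  by apply: mulIr; rewrite unitZpE.
split=> [x x2|p x y /=].
  by apply: (natmul_inj 2 q2); rewrite /= x2 mul0rn.
rewrite -!mulrS; apply: natmul_inj.
by case: p => [[|[|[|//]]] ?]; rewrite ?coprimen1.
Qed.

Definition F9 : Type := ('Z_3 * 'Z_3)%type.
HB.instance Definition _ := GRing.Zmodule.on F9.
HB.instance Definition _ := Finite.on F9.

(* rot + p has determinant p ^ 2 + 1, a unit mod 3. *)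
Definition rot (x : F9) : F9 := (- x.2, x.1)%R.

Lemma rot_admissible : admissible rot.
Proof.
split=> [x|p].
  by move=> /eqP; apply: contraTeq; case: x => [[[|[|[|?]]] ?] [[|[|[|?]]] ?]].
have kernel (z : F9) : (rot z + z *+ p = 0 -> z = 0)%R.
  by move=> /eqP; apply: contraTeq; case: z p => [[[|[|[|?]]] ?] [[|[|[|?]]] ?]] [[|[|[|?]]] ?].
move=> x y /= Exy; apply/eqP; rewrite -subr_eq0; apply/eqP/kernel.
have rotB : (rot (x - y) = rot x - rot y)%R by congr (_, _); rewrite /= opprD.
by rewrite rotB mulrnBl addrACA -opprD Exy subrr.
Qed.

Lemma card_F9 : #|{: F9}| = 9.
Proof. by rewrite card_prod card_ord. Qed.

Lemma coprime6 m : coprime m 6 = odd m && ~~ (3 %| m).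
Proof. by rewrite (coprimeMr m 2 3) coprimen2 coprime_sym prime_coprime. Qed.

Lemma transversal_resolvable_odd m : odd m -> m != 3 -> transversal_resolvable m.
Proof.
elim/ltn_ind: m => m IH odd_m m_neq3.
have m_gt0 := odd_gt0 odd_m.
have [[k m_eq]|not9] := altP (@dvdnP 9 m).
  have odd_k : odd k by move: odd_m; rewrite m_eq oddM andbT.
  rewrite m_eq.
  have [->|k_neq3] := eqVneq k 3.
    have e_neq0 : ((1, 0)%R : F9) != 0%R by [].
    by have := transversal_resolvable_triple rot_admissible e_neq0; rewrite card_F9.
  have lt_k : k < m by rewrite m_eq ltn_Pmulr // odd_gt0.
  have := transversal_resolvable_mul rot_admissible (IH k lt_k odd_k k_neq3).
  by rewrite card_F9.
have [[q m_eq]|not3] := altP (@dvdnP 3 m).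
  have q6 : coprime q 6.
    rewrite coprime6; move: odd_m not9; rewrite m_eq oddM andbT => -> /=.
    by apply: contra => /dvdnP [r ->]; rewrite -mulnA dvdn_mull.
  have q_gt1 : 1 < q by move: m_neq3 m_gt0; rewrite m_eq; lia.
  have := transversal_resolvable_triple (Zp_admissible q_gt1 q6) (oner_neq0 _).
  by rewrite card_ord Zp_cast // m_eq mulnC.
have m6 : coprime m 6 by rewrite coprime6 odd_m.
have [->|m_neq1] := eqVneq m 1; first exact: transversal_resolvable1.
have m_gt1 : 1 < m by rewrite ltn_neqAle eq_sym m_neq1.
have := transversal_resolvable_mul (Zp_admissible m_gt1 m6) transversal_resolvable1.
by rewrite card_ord Zp_cast // mul1n.
Qed.

Theorem theorem2p2 (n rho : nat) :
  0 < n -> n %% 6 = 3 ->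
  n \notin [:: 9; 15; 21; 141; 153; 165; 177; 189; 231; 249; 261; 285; 351; 357] ->
  1 <= rho -> 3 * rho <= n ->
  exists B : {set {set 'I_(n + rho)}},
    is_packing 4 B /\ #|B| * 3 = rho * n /\ largest_ppc B rho.
Proof.
move=> _ n_mod6 n_not_excluded _ le_rho.
have [m n_eq] : exists m, n = 3 * m by exists (n %/ 3); lia.
have odd_m : odd m by rewrite -[odd m]eqb1 -modn2; lia.
have m_neq3 : m != 3 by apply: contraNneq n_not_excluded => m3; rewrite n_eq m3.
have le_rho_m : rho <= m by lia.
have [B [packing_B card_B largest_B]] :=
  packing_of_transversal_resolvable (transversal_resolvable_odd odd_m m_neq3) n_eq le_rho_m.
by exists B; split=> //; split=> //; rewrite card_B; lia.
Qed.
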